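(* Let $T,C_1>0$ and let $\mu\in C([0,T],(0,\infty))$ satisfy $\Phi_h(\mu)\neq 0$. Then the Gâteaux derivatives below exist, and the following two statements are equivalent: (a) $\mathcal{G}(\mu)=C_1$ and there exists $\lambda\in\mathbb{R}$ such that for every $\delta\mu\in C([0,T],\mathbb{R})$, $\frac{\mathrm{d}}{\mathrm{d}\varepsilon}\Big|_{\varepsilon=0}\Big[\Phi(z_{\mu+\varepsilon\delta\mu}(T))+\lambda\,\mathcal{G}(\mu+\varepsilon\delta\mu)\Big]=0$ (the first-order necessary conditions for a stationary point of $\mu\mapsto\Phi(z_\mu(T))$ subject to $\mathcal{G}(\mu)=C_1$); (b) $\mathcal{G}(\mu)=C_1$ and there exists $\lambda_{\mathrm{ref}}\in\mathbb{R}$ such that for every $\delta\mu\in C([0,T],\mathbb{R})$, $\frac{\mathrm{d}}{\mathrm{d}\varepsilon}\Big|_{\varepsilon=0}\Big[\mathcal{I}(\mu+\varepsilon\delta\mu)+\lambda_{\mathrm{ref}}\,\mathcal{G}(\mu+\varepsilon\delta\mu)\Big]=0$ (the first-order necessary conditions for a stationary point of $\mathcal{I}$ subject to $\mathcal{G}(\mu)=C_1$). Moreover, the multipliers correspond via $\lambda_{\mathrm{ref}}=\lambda/\Phi_h(\mu)$.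
   Context: Standing setup: $n,s\ge1$, $p\in\mathbb{R}^s$, $z_0\in\mathbb{R}^n$; $h:\mathbb{R}^n\times\mathbb{R}^s\to\mathbb{R}^n$ is continuously differentiable in its first argument and such that the autonomous initial value problem $\hat z'(\tau)=h(\hat z(\tau),p)$, $\hat z(0)=z_0$ has a unique solution $\hat z$ defined for all $\tau\in\mathbb{R}$. For $T>0$ and $\mu\in C([0,T],\mathbb{R})$, $z_\mu:[0,T]\to\mathbb{R}^n$ denotes the solution of $\dot z(t)=\mu(t)h(z(t),p)$, $z(0)=z_0$. $\Phi:\mathbb{R}^n\to\mathbb{R}$ is continuously differentiable, and $g:\mathbb{R}\to\mathbb{R}$ is continuously differentiable and positive. Define $\mathcal{G}(\mu):=\int_0^T g(\mu(t))\,\mathrm{d}t$, $\mathcal{I}(\mu):=\int_0^T\mu(t)\,\mathrm{d}t$, and $\Phi_h(\mu):=\nabla\Phi(z_\mu(T))\cdot h(z_\mu(T),p)$ (the Lie derivative of $\Phi$ along $h$ at the terminal state). *)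

From mathcomp Require Import ssreflect ssrfun ssrbool eqtype ssrnat seq fintype bigop.
From Stdlib Require Import Reals ClassicalEpsilon.
Open Scope R_scope.

Definition vec (n : nat) := 'I_n -> R.

Definition fsum (n : nat) (f : 'I_n -> R) : R := \big[Rplus/0]_(i < n) f i.

(* l^1 norm on R^n (all norms are equivalent; any choice is fine). *)
Definition vnorm {n : nat} (x : vec n) : R := fsum n (fun i => Rabs (x i)).

Definition vsub {n : nat} (x y : vec n) : vec n := fun i => x i - y i.

Definition dot {n : nat} (x y : vec n) : R := fsum n (fun i => x i * y i).

Definition vcont {n : nat} (F : vec n -> R) (x : vec n) : Prop :=
  forall eps, 0 < eps -> exists delta, 0 < delta /\
    forall y, vnorm (vsub y x) < delta -> Rabs (F y - F x) < eps.

Definition frechet_grad {n : nat} (F : vec n -> R) (x gr : vec n) : Prop :=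
  forall eps, 0 < eps -> exists delta, 0 < delta /\
    forall y, vnorm (vsub y x) < delta ->
      Rabs (F y - F x - dot gr (vsub y x)) <= eps * vnorm (vsub y x).

Definition C1_scalar {n : nat} (F : vec n -> R) (DF : vec n -> vec n) : Prop :=
  (forall x, frechet_grad F x (DF x)) /\
  (forall x j, vcont (fun y => DF y j) x).

(* H : R^n -> R^n is continuously differentiable (Jacobian J x i j = dH_i/dx_j):
   Fréchet differentiable at every point with Jacobian J, and J continuous. *)
Definition C1_vector {n : nat} (H : vec n -> vec n) : Prop :=
  exists J : vec n -> 'I_n -> vec n,
    (forall x, forall eps, 0 < eps -> exists delta, 0 < delta /\
      forall y, vnorm (vsub y x) < delta ->
        vnorm (fun i => H y i - H x i - dot (J x i) (vsub y x))
          <= eps * vnorm (vsub y x)) /\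
    (forall x i j, vcont (fun y => J y i j) x).

Definition C1_real (g : R -> R) : Prop :=
  exists g' : R -> R, (forall t, derivable_pt_lim g t (g' t)) /\ continuity g'.

Definition cont_on (a b : R) (f : R -> R) : Prop :=
  forall t, a <= t <= b -> forall eps, 0 < eps -> exists delta, 0 < delta /\
    forall u, a <= u <= b -> Rabs (u - t) < delta -> Rabs (f u - f t) < eps.

(* Riemann integral of f over [a,b] (the value of RiemannInt, for any proof of
   integrability; continuous functions on [a,b] are integrable). *)
Definition Int (f : R -> R) (a b : R) : R :=
  epsilon (inhabits 0) (fun v => exists pr : Riemann_integrable f a b, RiemannInt pr = v).

Definition is_sol {n s : nat} (h : vec n -> vec s -> vec n) (p : vec s) (z0 : vec n)
    (T : R) (mu : R -> R) (z : R -> vec n) : Prop :=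
  z 0 = z0 /\
  (forall i, cont_on 0 T (fun t => z t i)) /\
  (forall t i, 0 < t < T -> derivable_pt_lim (fun u => z u i) t (mu t * h (z t) p i)).

Definition auto_sol {n s : nat} (h : vec n -> vec s -> vec n) (p : vec s) (z0 : vec n)
    (zh : R -> vec n) : Prop :=
  zh 0 = z0 /\ forall tau i, derivable_pt_lim (fun u => zh u i) tau (h (zh tau) p i).

Definition Gfun (g : R -> R) (T : R) (mu : R -> R) : R := Int (fun t => g (mu t)) 0 T.
Definition Ifun (T : R) (mu : R -> R) : R := Int mu 0 T.

Definition Phi_h {n s : nat} (DPhi : vec n -> vec n) (h : vec n -> vec s -> vec n)
    (p : vec s) (zT : vec n) : R := dot (DPhi zT) (h zT p).

Definition pert (mu dmu : R -> R) (eps : R) : R -> R := fun t => mu t + eps * dmu t.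

From HB Require Import structures.
From Pilot Require Import Defs.
From mathcomp Require Import ssreflect ssrfun ssrbool eqtype ssrnat seq fintype bigop.
From Stdlib Require Import Reals Lra FunctionalExtensionality Classical ClassicalEpsilon.
From Coquelicot Require Import Coquelicot.
Open Scope R_scope.

(** The solution of [z' = mu(t) h(z,p)] is a time change of the autonomous
    flow: [z_mu(t) = zhat (\int_0^t mu)], because [h] is C^1, hence locally
    Lipschitz, so solutions are unique.  Therefore
    [Phi(z_(mu + e dmu)(T)) = Phi(zhat(I(mu) + e I(dmu)))] has derivative
    [Phi_h(mu) I(dmu)] at [e = 0], while [I(mu + e dmu)] has derivative
    [I(dmu)].  The first variation of [Phi(z_mu(T)) + lambda G] is thus
    [Phi_h(mu)] times that of [I + (lambda / Phi_h(mu)) G], and the two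
    stationarity conditions coincide after rescaling the multiplier. *)

HB.instance Definition _ :=
  Monoid.isComLaw.Build R 0 Rplus (fun x y z => esym (Rplus_assoc x y z)) Rplus_comm Rplus_0_l.

Section FiniteSums.
Context {n : nat}.
Implicit Types (f g : 'I_n -> R).

Lemma fsum_ext f g : (forall i, f i = g i) -> fsum n f = fsum n g.
Proof. by move=> fg; apply: eq_bigr. Qed.

Lemma fsum_plus f g : fsum n (fun i => f i + g i) = fsum n f + fsum n g.
Proof. exact: big_split. Qed.

Lemma fsum_scal c f : fsum n (fun i => c * f i) = c * fsum n f.
Proof. by rewrite /fsum (big_morph (Rmult c) (Rmult_plus_distr_l c) (Rmult_0_r c)). Qed.

Lemma fsum_const c : fsum n (fun _ => c) = INR n * c.
Proof.
rewrite /fsum big_const_ord; elim: n => [|m IH] /=; first lra.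
by rewrite IH; case: m {IH} => /= *; lra.
Qed.

Lemma fsum_le f g : (forall i, f i <= g i) -> fsum n f <= fsum n g.
Proof. by move=> fg; apply: big_ind2 => [|*|i _]; [lra|lra|exact: fg]. Qed.

Lemma fsum_ge0 f : (forall i, 0 <= f i) -> 0 <= fsum n f.
Proof. by move=> f0; apply: big_ind => [|*|i _]; [lra|lra|exact: f0]. Qed.

Lemma Rabs_fsum_le f : Rabs (fsum n f) <= fsum n (fun i => Rabs (f i)).
Proof.
apply: (big_ind2 (fun x y => Rabs x <= y)) => [|x1 y1 x2 y2 *|i _].
- by rewrite Rabs_R0; lra.
- by have := Rabs_triang x1 x2; lra.
- exact: Rle_refl.
Qed.

Lemma fsum_term f i : (forall j, 0 <= f j) -> f i <= fsum n f.
Proof.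
move=> f0; rewrite /fsum (bigD1 i) //= -[X in X <= _]Rplus_0_r.
by apply: Rplus_le_compat_l; apply: big_ind => [|*|j _]; [lra|lra|exact: f0].
Qed.

Lemma derivable_pt_lim_fsum (F : 'I_n -> R -> R) (dF : 'I_n -> R) s :
  (forall i, derivable_pt_lim (F i) s (dF i)) ->
  derivable_pt_lim (fun t => fsum n (fun i => F i t)) s (fsum n dF).
Proof.
rewrite /fsum => dFi; elim: (index_enum _) => [|i r IH].
  rewrite big_nil; apply: (derivable_pt_lim_ext (fun _ => 0)); last first.
    exact: derivable_pt_lim_const.
  by move=> t; rewrite big_nil.
rewrite big_cons; apply: (derivable_pt_lim_ext (fun t => F i t + \big[Rplus/0]_(j <- r) F j t)).
  by move=> t; rewrite big_cons.
exact: derivable_pt_lim_plus.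
Qed.

Lemma common_delta (P : 'I_n -> R -> Prop) :
  (forall i d d', 0 < d' <= d -> P i d -> P i d') ->
  (forall i, exists d, 0 < d /\ P i d) -> exists d, 0 < d /\ forall i, P i d.
Proof.
move=> P_shrink P_ex.
suff [d [d0 Pd]] : exists d, 0 < d /\ forall i, i \in index_enum 'I_n -> P i d.
  by exists d; split=> // i; apply/Pd/mem_index_enum.
elim: (index_enum _) => [|j r [d [d0 Pd]]]; first by exists 1; split=> //; lra.
have [dj [dj0 Pj]] := P_ex j.
have m0 : 0 < Rmin dj d by apply: Rmin_glb_lt.
exists (Rmin dj d); split=> // i; rewrite in_cons => /orP [/eqP ->|ir].
- by apply: (P_shrink j dj) => //; split=> //; apply: Rmin_l.
- by apply: (P_shrink i d (Rmin dj d)) => //; [split=> //; apply: Rmin_r | apply: Pd].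
Qed.

End FiniteSums.

Section VectorNorm.
Context {n : nat}.
Implicit Types (x y w : vec n).

Lemma vnorm_ge0 x : 0 <= vnorm x.
Proof. by apply: fsum_ge0 => i; apply: Rabs_pos. Qed.

Lemma Rabs_coord_le_vnorm x i : Rabs (x i) <= vnorm x.
Proof. by apply: (@fsum_term n (fun j => Rabs (x j))) => j; apply: Rabs_pos. Qed.

Lemma vnorm_vsub_triangle x y w : vnorm (vsub x y) <= vnorm (vsub x w) + vnorm (vsub y w).
Proof.
rewrite /vnorm -fsum_plus; apply: fsum_le => i; rewrite /vsub.
have := Rabs_triang (x i - w i) (- (y i - w i)); rewrite Rabs_Ropp.
by have -> : x i - w i + - (y i - w i) = x i - y i by ring.
Qed.

Lemma Rabs_dot_le x y B : (forall j, Rabs (x j) <= B) -> Rabs (dot x y) <= B * vnorm y.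
Proof.
move=> xB; apply: Rle_trans (Rabs_fsum_le _) _.
rewrite /vnorm -fsum_scal; apply: fsum_le => j; rewrite Rabs_mult.
by apply: Rmult_le_compat_r; [apply: Rabs_pos | apply: xB].
Qed.

End VectorNorm.

Lemma Rabs_div_lt x k c eps : k <> 0 -> Rabs x <= c * Rabs k -> c < eps -> Rabs (x / k) < eps.
Proof.
move=> k0 xk ceps; have k_pos : 0 < Rabs k by apply: Rabs_pos_lt.
rewrite /Rdiv Rabs_mult Rabs_inv; apply: (Rmult_lt_reg_r (Rabs k)) => //.
by rewrite Rmult_assoc Rinv_l; [nra | lra].
Qed.

Lemma derivable_pt_lim_affine a b x : derivable_pt_lim (fun u => a + u * b) x b.
Proof.
move=> eps eps0; exists (mkposreal _ Rlt_0_1) => k k0 _.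
have -> : (a + (x + k) * b - (a + x * b)) / k - b = 0 by field.
by rewrite Rabs_R0.
Qed.

Lemma derivable_pt_lim_scal_shift f x l a c :
  derivable_pt_lim f x l -> derivable_pt_lim (fun t => a * (f t - c)) x (a * l).
Proof.
move=> fl; have := derivable_pt_lim_scal _ a x _ (derivable_pt_lim_minus f (fun _ => c) x l 0 fl
  (derivable_pt_lim_const c x)).
by rewrite Rminus_0_r.
Qed.

(** A function given on [0,T] is extended to R as [f (clamp T t)], so that the
    library results on everywhere continuous functions apply to it. *)

Definition clamp (T t : R) : R := Rmax 0 (Rmin t T).

Section Clamp.
Variable T : R.
Hypothesis T_ge0 : 0 <= T.

Lemma clamp_id t : 0 <= t <= T -> clamp T t = t.
Proof. by move=> ?; rewrite /clamp /Rmax /Rmin; repeat destruct Rle_dec; lra. Qed.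

Lemma clamp_range t : 0 <= clamp T t <= T.
Proof. by rewrite /clamp /Rmax /Rmin; repeat destruct Rle_dec; lra. Qed.

Lemma Rabs_clamp_sub u t : Rabs (clamp T u - clamp T t) <= Rabs (u - t).
Proof. by rewrite /clamp /Rmax /Rmin; repeat destruct Rle_dec; split_Rabs; lra. Qed.

Lemma continuity_pt_clamp f x : cont_on 0 T f -> continuity_pt (fun t => f (clamp T t)) x.
Proof.
move=> fc eps eps0; have [d [d0 fd]] := fc (clamp T x) (clamp_range x) eps eps0.
exists d; split=> // y [_ yx]; rewrite /= /R_dist in yx *.
by apply: fd; [apply: clamp_range | have := Rabs_clamp_sub y x; lra].
Qed.

Lemma derivable_pt_lim_clamp f t l :
  0 < t < T -> derivable_pt_lim f t l -> derivable_pt_lim (fun u => f (clamp T u)) t l.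
Proof.
move=> t_in fl eps eps0; have [d fd] := fl eps eps0.
have r0 : 0 < Rmin d (Rmin t (T - t)) by apply: Rmin_glb_lt; [apply: cond_pos | apply: Rmin_glb_lt; lra].
exists (mkposreal _ r0) => k k0 /= kr.
have := Rmin_l d (Rmin t (T - t)); have := Rmin_r d (Rmin t (T - t)).
have := Rmin_l t (T - t); have := Rmin_r t (T - t) => *.
rewrite !clamp_id; [apply: fd => //; lra | lra | split_Rabs; lra].
Qed.

Lemma cont_on_ext f g : (forall t, 0 <= t <= T -> f t = g t) -> cont_on 0 T f -> cont_on 0 T g.
Proof.
move=> fg fc t t_in eps eps0; have [d [d0 fd]] := fc t t_in eps eps0.
by exists d; split=> // u u_in ut; rewrite -!fg //; apply: fd.
Qed.

Lemma cont_on_continuity f : (forall x, continuity_pt f x) -> cont_on 0 T f.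
Proof.
move=> fc t _ eps eps0; have [d [d0 fd]] := fc t eps eps0.
exists d; split=> // u _ ut; case: (Req_dec u t) => [->|ut_neq].
  by rewrite Rminus_diag Rabs_R0.
by apply: (fd u); split=> //; split=> //; congruence.
Qed.

End Clamp.

(** * Local Lipschitz continuity of C^1 vector fields *)

Definition locally_lipschitz {n} (H : vec n -> vec n) : Prop :=
  forall w0, exists r, 0 < r /\ exists L, 0 <= L /\
    forall a b, vnorm (vsub a w0) < r -> vnorm (vsub b w0) < r ->
      forall i, Rabs (H b i - H a i) <= L * vnorm (vsub b a).

Definition segment {n} (a b : vec n) (s : R) : vec n := fun j => a j + s * (b j - a j).

Section Segment.
Context {n : nat} (a b : vec n).

Lemma vsub_segment s k : vsub (segment a b (s + k)) (segment a b s) = fun j => k * (b j - a j).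
Proof. by apply: functional_extensionality => j; rewrite /vsub /segment; ring. Qed.

Lemma vnorm_segment_sub w0 c : 0 <= c <= 1 ->
  vnorm (vsub (segment a b c) w0) <= (1 - c) * vnorm (vsub a w0) + c * vnorm (vsub b w0).
Proof.
move=> c01; rewrite /vnorm -!fsum_scal -fsum_plus; apply: fsum_le => k; rewrite /vsub /segment.
have -> : a k + c * (b k - a k) - w0 k = (1 - c) * (a k - w0 k) + c * (b k - w0 k) by ring.
apply: Rle_trans (Rabs_triang _ _) _.
by rewrite !Rabs_mult (Rabs_right (1 - c)) ?(Rabs_right c); lra.
Qed.

Lemma derivable_pt_lim_along_segment (H : vec n -> vec n) (J : vec n -> 'I_n -> vec n) i s :
  (forall eps, 0 < eps -> exists delta, 0 < delta /\
     forall y, vnorm (vsub y (segment a b s)) < delta ->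
       vnorm (fun i => H y i - H (segment a b s) i - dot (J (segment a b s) i) (vsub y (segment a b s)))
         <= eps * vnorm (vsub y (segment a b s))) ->
  derivable_pt_lim (fun s => H (segment a b s) i) s (dot (J (segment a b s) i) (vsub b a)).
Proof.
set x := segment a b s; set N := vnorm (vsub b a) => HF eps eps0.
have N0 : 0 <= N by apply: vnorm_ge0.
have e0 : 0 < eps / 2 / (N + 1) by apply: Rdiv_lt_0_compat; lra.
have [d [d0 Hd]] := HF _ e0.
have dN0 : 0 < d / (N + 1) by apply: Rdiv_lt_0_compat; lra.
exists (mkposreal _ dN0) => k k0 /= kd.
have step_norm : vnorm (vsub (segment a b (s + k)) x) = Rabs k * N.
  by rewrite /x vsub_segment /vnorm /N -fsum_scal; apply: fsum_ext => j; rewrite -Rabs_mult.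
have step_dot : dot (J x i) (vsub (segment a b (s + k)) x) = k * dot (J x i) (vsub b a).
  by rewrite /x vsub_segment /dot -fsum_scal; apply: fsum_ext => j; rewrite /vsub; ring.
have kN : Rabs k * (N + 1) < d.
  have := Rmult_lt_compat_r (N + 1) _ _ ltac:(lra) kd; by rewrite /Rdiv Rmult_assoc Rinv_l; lra.
have := Hd (segment a b (s + k)) ltac:(rewrite step_norm; nra).
have := Rabs_coord_le_vnorm (fun i => H (segment a b (s + k)) i - H x i
          - dot (J x i) (vsub (segment a b (s + k)) x)) i.
rewrite /= step_dot step_norm => coord_le bound.
have -> : (H (segment a b (s + k)) i - H x i) / k - dot (J x i) (vsub b a)
        = (H (segment a b (s + k)) i - H x i - k * dot (J x i) (vsub b a)) / k by field.
apply: (Rabs_div_lt _ _ (eps / 2 / (N + 1) * N)) => //; first by have := Rabs_pos k; nra.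
have -> : eps / 2 / (N + 1) * N = eps / 2 - eps / 2 / (N + 1) by field; lra.
lra.
Qed.

End Segment.

Lemma jacobian_locally_bounded n (J : vec n -> 'I_n -> vec n) (w0 : vec n) :
  (forall x i j, vcont (fun y => J y i j) x) ->
  exists r, 0 < r /\ exists L, 0 <= L /\
    forall i j y, vnorm (vsub y w0) < r -> Rabs (J y i j) <= L.
Proof.
move=> Jc.
have [r [r0 Jr]] : exists r, 0 < r /\ forall i j y, vnorm (vsub y w0) < r -> Rabs (J y i j - J w0 i j) < 1.
  apply: (common_delta (fun i d => forall j y, vnorm (vsub y w0) < d -> Rabs (J y i j - J w0 i j) < 1)).
    by move=> i d d' dd' Pd j y yd; apply: Pd; lra.
  move=> i; apply: (common_delta (fun j d => forall y, vnorm (vsub y w0) < d -> Rabs (J y i j - J w0 i j) < 1)).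
    by move=> j d d' dd' Pd y yd; apply: Pd; lra.
  by move=> j; have [d [d0 Jd]] := Jc w0 i j 1 Rlt_0_1; exists d.
set B := fun i j => Rabs (J w0 i j) + 1.
have B0 : forall i j, 0 <= B i j by move=> i j; have := Rabs_pos (J w0 i j); rewrite /B; lra.
exists r; split=> //; exists (fsum n (fun i => fsum n (B i))); split.
  by apply: fsum_ge0 => i; apply: fsum_ge0.
move=> i j y yr; have := Jr i j y yr; have := Rabs_triang_inv (J y i j) (J w0 i j) => ??.
apply: (Rle_trans _ (B i j)); first by rewrite /B; lra.
apply: (Rle_trans _ (fsum n (B i))); first exact: fsum_term.
by apply: (@fsum_term n (fun i => fsum n (B i))) => k; apply: fsum_ge0.
Qed.

Lemma C1_vector_locally_lipschitz n (H : vec n -> vec n) : C1_vector H -> locally_lipschitz H.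
Proof.
move=> [J [HF Jc]] w0; have [r [r0 [L [L0 JL]]]] := jacobian_locally_bounded n J w0 Jc.
exists r; split=> //; exists L; split=> // a b ar br i.
have [c [mvt c01]] := MVT_cor2 (fun s => H (segment a b s) i)
  (fun s => dot (J (segment a b s) i) (vsub b a)) 0 1 Rlt_0_1
  (fun s _ => derivable_pt_lim_along_segment a b H J i s (HF _)).
have seg1 : segment a b 1 = b by apply: functional_extensionality => j; rewrite /segment; ring.
have seg0 : segment a b 0 = a by apply: functional_extensionality => j; rewrite /segment; ring.
rewrite /= seg1 seg0 in mvt; rewrite mvt Rminus_0_r Rmult_1_r.
apply: Rabs_dot_le => j; apply: JL.
apply: Rle_lt_trans (vnorm_segment_sub a b w0 c (conj (Rlt_le _ _ (proj1 c01)) (Rlt_le _ _ (proj2 c01)))) _.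
have := Rmult_lt_0_compat (1 - c) (r - vnorm (vsub a w0)) ltac:(lra) ltac:(lra).
have := Rmult_lt_0_compat c (r - vnorm (vsub b w0)) ltac:(lra) ltac:(lra).
lra.
Qed.

(** * Uniqueness for the non-autonomous equation z' = m(t) H(z) *)

Lemma sup_contraction_eq0 (e : R -> R) a b k :
  a <= b -> k < 1 -> (forall u, a <= u <= b -> 0 <= e u) ->
  (exists B, forall u, a <= u <= b -> e u <= B) ->
  (forall Q, 0 <= Q -> (forall u, a <= u <= b -> e u <= Q) -> forall u, a <= u <= b -> e u <= k * Q) ->
  forall u, a <= u <= b -> e u = 0.
Proof.
move=> ab k1 e0 [B eB] contr.
set E := fun v => exists u, a <= u <= b /\ v = e u.
have [Q [Q_ub Q_lub]] : {Q | is_lub E Q}.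
  apply: completeness; first by exists B => _ [u [u_in ->]]; apply: eB.
  by exists (e a), a; split=> //; lra.
have eQ : forall u, a <= u <= b -> e u <= Q by move=> u u_in; apply: Q_ub; exists u.
have Q0 : 0 <= Q by apply: Rle_trans (e0 a _) (eQ a _); lra.
have : Q <= k * Q by apply: Q_lub => _ [u [u_in ->]]; apply: contr.
by move=> Qk u u_in; have := eQ u u_in; have := e0 u u_in; nra.
Qed.

Lemma real_induction (P : R -> Prop) T : 0 <= T ->
  P 0 ->
  (forall t, 0 < t <= T -> (forall u, 0 <= u < t -> P u) -> P t) ->
  (forall t, 0 <= t < T -> P t -> exists d, 0 < d /\ forall u, t <= u <= t + d -> u <= T -> P u) ->
  forall t, 0 <= t <= T -> P t.
Proof.
move=> T0 P0 P_closed P_open.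
set S := fun t => 0 <= t <= T /\ forall u, 0 <= u <= t -> P u.
have S0 : S 0 by split=> [|u u0]; [lra | have -> : u = 0 by lra].
have [ts [ts_ub ts_lub]] : {ts | is_lub S ts}.
  by apply: completeness; [exists T => t [t_in _]; lra | exists 0].
have ts0 : 0 <= ts by apply: ts_ub.
have tsT : ts <= T by apply: ts_lub => t [t_in _]; lra.
have below : forall u, 0 <= u < ts -> P u.
  move=> u u_in; apply: NNPP => Pu.
  have : ts <= u; last lra.
  apply: ts_lub => t [t_in Pt]; apply: Rnot_lt_le => ut; apply: Pu; apply: Pt; lra.
have P_ts : P ts.
  by case: (Req_dec ts 0) => [->|ts_neq] //; apply: P_closed => //; lra.
have S_ts : S ts.
  split=> [|u u_in]; first lra.
  by case: (Req_dec u ts) => [->|u_neq] //; apply: below; lra.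
move=> t t_in; case: (Req_dec ts T) => [tsT_eq|tsT_neq]; first by apply: (proj2 S_ts); lra.
have [d [d0 Pd]] := P_open ts ltac:(lra) P_ts.
have := Rmin_l (ts + d) T; have := Rmin_r (ts + d) T => ??.
have : S (Rmin (ts + d) T).
  split; first by split; [apply: Rmin_glb; lra | apply: Rmin_r].
  move=> u u_in; case: (Rle_lt_dec u ts) => u_ts; first by apply: (proj2 S_ts); lra.
  by apply: Pd; lra.
move/ts_ub; have : ts < Rmin (ts + d) T by apply: Rmin_glb_lt; lra.
lra.
Qed.

Lemma cont_on_eq_at_left f g T t :
  cont_on 0 T f -> cont_on 0 T g -> 0 < t <= T ->
  (forall u, 0 <= u < t -> f u = g u) -> f t = g t.
Proof.
move=> fc gc t_in fg; apply: NNPP => ft_neq.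
have gap : 0 < Rabs (f t - g t) / 2 by apply: Rdiv_lt_0_compat; [apply: Rabs_pos_lt; lra | lra].
have [df [df0 fd]] := fc t ltac:(lra) _ gap.
have [dg [dg0 gd]] := gc t ltac:(lra) _ gap.
set u := t - Rmin (Rmin df dg) t / 2.
have := Rmin_l (Rmin df dg) t; have := Rmin_r (Rmin df dg) t.
have := Rmin_l df dg; have := Rmin_r df dg.
have : 0 < Rmin (Rmin df dg) t by apply: Rmin_glb_lt; [apply: Rmin_glb_lt | lra].
move=> ?????.
have := fd u ltac:(rewrite /u; lra) ltac:(rewrite /u; split_Rabs; lra).
have := gd u ltac:(rewrite /u; lra) ltac:(rewrite /u; split_Rabs; lra).
rewrite (fg u); last by rewrite /u; lra.
by split_Rabs; lra.
Qed.

Lemma vnorm_eq0 {n} (x : vec n) : vnorm x = 0 -> x = fun _ => 0.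
Proof.
move=> x0; apply: functional_extensionality => i.
have := Rabs_coord_le_vnorm x i; have := Rabs_pos (x i); rewrite x0 => ??.
by apply: Rabs_eq_0; lra.
Qed.

Lemma cont_on_vnorm_near {n} (w : R -> vec n) T c r :
  (forall i, cont_on 0 T (fun t => w t i)) -> 0 <= c <= T -> 0 < r ->
  exists d, 0 < d /\ forall u, 0 <= u <= T -> Rabs (u - c) < d -> vnorm (vsub (w u) (w c)) < r.
Proof.
move=> wc c_in r0; have n0 := pos_INR n.
set rr := r / (INR n + 1).
have rr0 : 0 < rr by apply: Rdiv_lt_0_compat; lra.
have [d [d0 wd]] : exists d, 0 < d /\ forall i u, 0 <= u <= T -> Rabs (u - c) < d -> Rabs (w u i - w c i) < rr.
  apply: (common_delta (fun i d => forall u, 0 <= u <= T -> Rabs (u - c) < d -> Rabs (w u i - w c i) < rr)).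
    by move=> i d d' dd' Pd u u_in ud; apply: Pd; lra.
  by move=> i; have [d [d0 wd]] := wc i c c_in rr rr0; exists d.
exists d; split=> // u u_in ud.
apply: (Rle_lt_trans _ (INR n * rr)); first by rewrite -fsum_const; apply: fsum_le => i; apply/Rlt_le/wd.
have -> : INR n * rr = r - rr by rewrite /rr; field; lra.
lra.
Qed.

Section Uniqueness.
Context {n : nat}.
Variables (H : vec n -> vec n) (T : R) (m : R -> R) (z y : R -> vec n).
Hypotheses (T_pos : 0 < T) (H_lip : locally_lipschitz H) (m_cont : cont_on 0 T m)
  (z_cont : forall i, cont_on 0 T (fun t => z t i))
  (y_cont : forall i, cont_on 0 T (fun t => y t i))
  (z_ode : forall t i, 0 < t < T -> derivable_pt_lim (fun u => z u i) t (m t * H (z t) i))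
  (y_ode : forall t i, 0 < t < T -> derivable_pt_lim (fun u => y u i) t (m t * H (y t) i)).

Lemma solutions_difference_mvt c u i : 0 <= c < u -> u <= T -> exists x, c <= x <= u /\
  z u i - y u i - (z c i - y c i) = (u - c) * (m x * (H (z x) i - H (y x) i)).
Proof.
move=> cu uT; set f := fun t => z (clamp T t) i - y (clamp T t) i.
have f' : forall x, Rmin c u < x < Rmax c u -> is_derive f x (m x * (H (z x) i - H (y x) i)).
  rewrite Rmin_left ?Rmax_right; try lra; move=> x x_in; apply/is_derive_Reals.
  rewrite Rmult_minus_distr_l; apply: derivable_pt_lim_minus.
  - by apply: (derivable_pt_lim_clamp T (fun t => z t i)); [lra | apply: z_ode; lra].
  - by apply: (derivable_pt_lim_clamp T (fun t => y t i)); [lra | apply: y_ode; lra].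
have fc : forall x, Rmin c u <= x <= Rmax c u -> continuity_pt f x.
  move=> x _; apply: continuity_pt_minus.
  - by apply: (continuity_pt_clamp T ltac:(lra) (fun t => z t i)); apply: z_cont.
  - by apply: (continuity_pt_clamp T ltac:(lra) (fun t => y t i)); apply: y_cont.
have [x [x_in fx]] := MVT_gen f c u _ f' fc.
exists x; split; first by move: x_in; rewrite Rmin_left ?Rmax_right; lra.
by move: fx; rewrite /f !clamp_id; [move=> ->; ring | lra..].
Qed.

Lemma solutions_agree_forward c : 0 <= c < T -> z c = y c ->
  exists d, 0 < d /\ forall u, c <= u <= c + d -> u <= T -> z u = y u.
Proof.
(* On [c, c + d] the mean value theorem and the Lipschitz bound give
   |z - y| <= d K sup |z - y| <= sup |z - y| / 2. *)
move=> c_in zyc; have [r [r0 [L [L0 lip]]]] := H_lip (z c).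
have [dz [dz0 zd]] := cont_on_vnorm_near z T c r z_cont ltac:(lra) r0.
have [dy [dy0 yd]] := cont_on_vnorm_near y T c r y_cont ltac:(lra) r0.
have [dm [dm0 md]] := m_cont c ltac:(lra) 1 Rlt_0_1.
set Mb := Rabs (m c) + 1; set K := INR n * Mb * L.
have Mb0 : 0 <= Mb by have := Rabs_pos (m c); rewrite /Mb; lra.
have K0 : 0 <= K by apply: Rmult_le_pos => //; apply: Rmult_le_pos => //; apply: pos_INR.
set d1 := Rmin (Rmin dz dy) dm.
have d10 : 0 < d1 by do 2 apply: Rmin_glb_lt => //.
have [d1z [d1y d1m]] : d1 <= dz /\ d1 <= dy /\ d1 <= dm.
  have := Rmin_l (Rmin dz dy) dm; have := Rmin_r (Rmin dz dy) dm.
  by have := Rmin_l dz dy; have := Rmin_r dz dy; rewrite /d1; lra.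
set d := Rmin (d1 / 2) (1 / (2 * K + 2)).
have [dd1 dK2] : d <= d1 / 2 /\ d <= 1 / (2 * K + 2) by split; [apply: Rmin_l | apply: Rmin_r].
have d0 : 0 < d by apply: Rmin_glb_lt; [lra | apply: Rdiv_lt_0_compat; lra].
have dK : d * K <= 1 / 2.
  have : d * (2 * K + 2) <= 1; last nra.
  have := Rmult_le_compat_r (2 * K + 2) d (1 / (2 * K + 2)) ltac:(lra) ltac:(lra).
  by rewrite /Rdiv Rmult_1_l Rinv_l; lra.
set b := Rmin (c + d) T.
have [bcd bT] : b <= c + d /\ b <= T by split; [apply: Rmin_l | apply: Rmin_r].
have near_c : forall x, c <= x <= b -> 0 <= x <= T /\ Rabs (x - c) < d1.
  by move=> x x_in; split; [lra | rewrite Rabs_right; lra].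
have gap0 : forall u, c <= u <= b -> vnorm (vsub (z u) (y u)) = 0.
  apply: (sup_contraction_eq0 _ c b (1 / 2)); [by rewrite /b; apply: Rmin_glb; lra | lra | | |].
  - by move=> u _; apply: vnorm_ge0.
  - exists (2 * r) => u /near_c [u_in uc]; apply: Rle_trans (vnorm_vsub_triangle _ _ (z c)) _.
    by rewrite zyc in zd *; have := zd u u_in ltac:(lra); have := yd u u_in ltac:(lra); lra.
  move=> Q Q0 gapQ u u_c; apply: (Rle_trans _ (INR n * (d * (Mb * (L * Q))))); last first.
    have -> : INR n * (d * (Mb * (L * Q))) = d * K * Q by rewrite /K; ring.
    nra.
  rewrite -fsum_const; apply: fsum_le => i; rewrite /vsub.
  case: (Req_dec u c) => [->|uc]; first rewrite zyc Rminus_diag Rabs_R0.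
    by apply: Rmult_le_pos; [lra | apply: Rmult_le_pos => //; apply: Rmult_le_pos].
  have [x [x_in mvt]] := solutions_difference_mvt c u i ltac:(lra) ltac:(lra).
  rewrite zyc Rminus_diag Rminus_0_r in mvt.
  rewrite mvt !Rabs_mult (Rabs_right (u - c)); last lra.
  have [x_T x_c] := near_c x ltac:(lra).
  have mx : Rabs (m x) <= Mb.
    by have := md x x_T ltac:(lra); have := Rabs_triang_inv (m x) (m c); rewrite /Mb; lra.
  have Hx : Rabs (H (z x) i - H (y x) i) <= L * Q.
    apply: Rle_trans (lip (y x) (z x) _ _ i) _.
    - by rewrite -zyc in yd; apply: yd; lra.
    - by apply: zd; lra.
    - by apply: Rmult_le_compat_l => //; apply: gapQ; lra.
  have := Rabs_pos (m x); have := Rabs_pos (H (z x) i - H (y x) i) => ??.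
  by apply: Rmult_le_compat; [lra | apply: Rmult_le_pos | lra | apply: Rmult_le_compat].
exists d; split=> // u u_c uT.
have u_b : c <= u <= b by split; [lra | apply: Rmin_glb; lra].
apply: functional_extensionality => i; have := vnorm_eq0 _ (gap0 u u_b).
by move/(congr1 (fun x => x i)); rewrite /vsub; lra.
Qed.

Lemma ode_solution_unique : z 0 = y 0 -> z T = y T.
Proof.
move=> zy0; apply: (real_induction (fun t => z t = y t) T) => //; try lra.
- move=> t t_in zy; apply: functional_extensionality => i.
  apply: (cont_on_eq_at_left (fun t => z t i) (fun t => y t i) T) => // u u_in.
  by rewrite zy.
- exact: solutions_agree_forward.
Qed.

End Uniqueness.

Section ChainRule.
Context {n : nat}.
Variables (gam : R -> vec n) (v : vec n) (s : R).
Hypothesis gam_deriv : forall i, derivable_pt_lim (fun t => gam t i) s (v i).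

Lemma curve_increment_le : exists d V, 0 < d /\ 0 <= V /\
  forall k, k <> 0 -> Rabs k < d -> vnorm (vsub (gam (s + k)) (gam s)) <= Rabs k * V.
Proof.
have [d [d0 gd]] : exists d, 0 < d /\ forall i k, k <> 0 -> Rabs k < d ->
    Rabs ((gam (s + k) i - gam s i) / k - v i) < 1.
  apply: (common_delta (fun i d => forall k, k <> 0 -> Rabs k < d ->
    Rabs ((gam (s + k) i - gam s i) / k - v i) < 1)).
    by move=> i d d' dd' Pd k k0 kd; apply: Pd => //; lra.
  by move=> i; have [d gd] := gam_deriv i 1 Rlt_0_1; exists d; split; [apply: cond_pos | exact: gd].
exists d, (fsum n (fun i => Rabs (v i) + 1)); split=> //; split.
  by apply: fsum_ge0 => i; have := Rabs_pos (v i); lra.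
move=> k k0 kd; rewrite /vnorm -fsum_scal; apply: fsum_le => i; rewrite /vsub.
have -> : gam (s + k) i - gam s i = k * ((gam (s + k) i - gam s i) / k) by field.
rewrite Rabs_mult; apply: Rmult_le_compat_l; first exact: Rabs_pos.
by have := gd i k k0 kd; have := Rabs_triang_inv ((gam (s + k) i - gam s i) / k) (v i); lra.
Qed.

Lemma derivable_pt_lim_frechet_comp (Phi : vec n -> R) (gr : vec n) :
  frechet_grad Phi (gam s) gr -> derivable_pt_lim (fun t => Phi (gam t)) s (dot gr v).
Proof.
move=> Phi_grad eps eps0.
have [d0 [V [d00 [V0 incr]]]] := curve_increment_le.
set q := fun t => dot gr (vsub (gam t) (gam s)).
have q_deriv : derivable_pt_lim q s (dot gr v).
  by apply: (derivable_pt_lim_fsum (fun i t => gr i * (gam t i - gam s i))) => i;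
    apply: derivable_pt_lim_scal_shift.
have q0 : q s = 0.
  by rewrite /q /dot /vsub (fsum_ext _ (fun _ => 0)) ?fsum_const => [|i]; ring.
have e0 : 0 < eps / 2 / (V + 1) by apply: Rdiv_lt_0_compat; lra.
have [dF [dF0 PhiF]] := Phi_grad _ e0.
have [dq qd] := q_deriv (eps / 2) ltac:(lra).
have dmin0 : 0 < Rmin d0 (Rmin dq (dF / (V + 1))).
  by apply: Rmin_glb_lt => //; apply: Rmin_glb_lt; [apply: cond_pos | apply: Rdiv_lt_0_compat; lra].
exists (mkposreal _ dmin0) => k k0 /= kd.
have := Rmin_l d0 (Rmin dq (dF / (V + 1))); have := Rmin_r d0 (Rmin dq (dF / (V + 1))).
have := Rmin_l dq (dF / (V + 1)); have := Rmin_r dq (dF / (V + 1)) => ????.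
have gk := incr k k0 ltac:(lra).
have kVd : Rabs k * (V + 1) < dF.
  have := Rmult_lt_compat_r (V + 1) _ _ ltac:(lra) (ltac:(lra) : Rabs k < dF / (V + 1)).
  by rewrite /Rdiv Rmult_assoc Rinv_l; lra.
have := qd k k0 ltac:(lra); rewrite q0 Rminus_0_r => qk.
have -> : (Phi (gam (s + k)) - Phi (gam s)) / k - dot gr v =
   (Phi (gam (s + k)) - Phi (gam s) - q (s + k)) / k + (q (s + k) / k - dot gr v) by field.
apply: Rle_lt_trans (Rabs_triang _ _) _.
have : Rabs ((Phi (gam (s + k)) - Phi (gam s) - q (s + k)) / k) < eps / 2; last lra.
apply: (Rabs_div_lt _ _ (eps / 2 / (V + 1) * V)) => //.
  apply: Rle_trans (PhiF (gam (s + k)) ltac:(have := Rabs_pos k; nra)) _.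
  by have := Rmult_le_compat_l (eps / 2 / (V + 1)) _ _ ltac:(lra) gk; nra.
have -> : eps / 2 / (V + 1) * V = eps / 2 - eps / 2 / (V + 1) by field; lra.
lra.
Qed.

End ChainRule.

Lemma ex_RInt_continuity F a b : (forall t, continuity_pt F t) -> ex_RInt F a b.
Proof. by move=> Fc; apply: ex_RInt_continuous => t _; apply/continuity_pt_filterlim. Qed.

Lemma Int_eq_RInt T f F : 0 <= T -> (forall t, continuity_pt F t) ->
  (forall t, 0 <= t <= T -> f t = F t) -> Defs.Int f 0 T = RInt F 0 T.
Proof.
move=> T0 Fc fF.
have Fi : ex_RInt F 0 T by apply: ex_RInt_continuity.
have fi : ex_RInt f 0 T.
  apply: (ex_RInt_ext F) => // x; rewrite Rmin_left ?Rmax_right // => x_in.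
  by rewrite fF //; lra.
rewrite /Defs.Int; have [pr <-] := epsilon_spec (inhabits 0) (fun v => exists pr, RiemannInt pr = v)
  (ex_intro _ _ (ex_intro _ (ex_RInt_Reals_0 _ _ _ fi) erefl)).
rewrite -RInt_Reals; apply: RInt_ext => x; rewrite Rmin_left ?Rmax_right // => x_in.
by rewrite fF //; lra.
Qed.

Lemma RInt_affine M D e T : ex_RInt M 0 T -> ex_RInt D 0 T ->
  RInt (fun t => M t + e * D t) 0 T = RInt M 0 T + e * RInt D 0 T.
Proof.
move=> Mi Di; rewrite (RInt_plus M (fun t => e * D t)) //; last exact: ex_RInt_scal.
by rewrite (RInt_scal D).
Qed.

Lemma derivable_pt_lim_RInt_upper M t : (forall x, continuity_pt M x) ->
  derivable_pt_lim (fun b => RInt M 0 b) t (M t).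
Proof.
move=> Mc; apply/is_derive_Reals; apply: (is_derive_RInt M _ 0).
  by apply: filter_forall => b; apply: RInt_correct; apply: ex_RInt_continuity.
exact/continuity_pt_filterlim.
Qed.

Lemma derivable_RInt_param_affine g M D T :
  C1_real g -> (forall x, continuity_pt M x) -> (forall x, continuity_pt D x) ->
  exists l, derivable_pt_lim (fun e => RInt (fun t => g (M t + e * D t)) 0 T) 0 l.
Proof.
move=> [g' [g'_deriv g'_cont]] Mc Dc.
have gc : forall x, continuity_pt g x.
  by move=> x; apply: derivable_continuous_pt; exists (g' x); apply: g'_deriv.
have g_affine : forall t e, derivable_pt_lim (fun u => g (M t + u * D t)) e (g' (M t + e * D t) * D t).
  move=> t e; apply: (derivable_pt_lim_comp (fun u => M t + u * D t) g) => //.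
  exact: derivable_pt_lim_affine.
eexists; apply/is_derive_Reals; apply: (is_derive_RInt_param (fun u t => g (M t + u * D t))).
- apply: filter_forall => e t _; exists (g' (M t + e * D t) * D t).
  exact/is_derive_Reals/g_affine.
- move=> t _; apply: (continuity_2d_pt_ext (fun u v => g' (M v + u * D v) * D v)).
    by move=> u v; symmetry; apply: is_derive_unique; apply/is_derive_Reals/g_affine.
  have cD : continuity_2d_pt (fun _ v => D v) 0 t.
    by apply: (continuity_1d_2d_pt_comp D (fun _ v => v)); [apply: Dc | apply: continuity_2d_pt_id2].
  apply: continuity_2d_pt_mult => //.
  apply: (continuity_1d_2d_pt_comp g' (fun u v => M v + u * D v)); first exact: g'_cont.
  apply: continuity_2d_pt_plus.
    by apply: (continuity_1d_2d_pt_comp M (fun _ v => v)); [apply: Mc | apply: continuity_2d_pt_id2].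
  by apply: continuity_2d_pt_mult => //; apply: continuity_2d_pt_id1.
- apply: filter_forall => e; apply: ex_RInt_continuity => x.
  apply: continuity_pt_comp; last exact: gc.
  by apply: continuity_pt_plus => //; apply: continuity_pt_mult => //; apply: continuity_pt_const.
Qed.

(** * Solutions as time changes of the autonomous flow *)

Lemma reparametrized_solution {n s} (h : vec n -> vec s -> vec n) p z0 zh T m :
  0 < T -> auto_sol h p z0 zh -> cont_on 0 T m ->
  is_sol h p z0 T m (fun t => zh (RInt (fun u => m (clamp T u)) 0 t)).
Proof.
move=> T0 [zh0 zh'] mc; set M := fun u => m (clamp T u).
have Mc : forall x, continuity_pt M x by move=> x; apply: continuity_pt_clamp => //; lra.
have z' : forall t i,
    derivable_pt_lim (fun u => zh (RInt M 0 u) i) t (h (zh (RInt M 0 t)) p i * M t).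
  move=> t i; apply: (derivable_pt_lim_comp (fun b => RInt M 0 b) (fun u => zh u i)).
  - exact: derivable_pt_lim_RInt_upper.
  - exact: zh'.
split; [by rewrite RInt_point | split].
- move=> i; apply: cont_on_continuity => x.
  by apply: derivable_continuous_pt; exists (h (zh (RInt M 0 x)) p i * M x); apply: z'.
- move=> t i t_in; have := z' t i; rewrite /M clamp_id; last lra.
  by rewrite Rmult_comm.
Qed.

Lemma solution_terminal_state {n s} (h : vec n -> vec s -> vec n) p z0 zh T m z :
  0 < T -> C1_vector (fun x => h x p) -> auto_sol h p z0 zh -> cont_on 0 T m ->
  is_sol h p z0 T m z -> z T = zh (Defs.Int m 0 T).
Proof.
move=> T0 hC1 zh_sol mc [z_0 [zc z']].
have [w_0 [wc w']] := reparametrized_solution h p z0 zh T m T0 zh_sol mc.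
rewrite (Int_eq_RInt T m (fun t => m (clamp T t))); first last.
- by move=> t t_in; rewrite clamp_id.
- by move=> x; apply: continuity_pt_clamp => //; lra.
- lra.
apply: (ode_solution_unique (fun x => h x p) T m z
  (fun t => zh (RInt (fun u => m (clamp T u)) 0 t))) => //.
- exact: C1_vector_locally_lipschitz.
- by rewrite z_0 w_0.
Qed.

(** * First variations along a perturbation [mu + e dmu] *)

Section FirstVariation.
Variables (T : R) (mu dmu : R -> R).
Hypotheses (T_pos : 0 < T) (mu_cont : cont_on 0 T mu) (dmu_cont : cont_on 0 T dmu).

Let M := fun t => mu (clamp T t).
Let D := fun t => dmu (clamp T t).

Let M_cont x : continuity_pt M x.
Proof. by apply: continuity_pt_clamp => //; lra. Qed.

Let D_cont x : continuity_pt D x.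
Proof. by apply: continuity_pt_clamp => //; lra. Qed.

Let pert_clamp e t : 0 <= t <= T -> pert mu dmu e t = M t + e * D t.
Proof. by move=> t_in; rewrite /pert /M /D clamp_id. Qed.

Lemma cont_on_pert e : cont_on 0 T (pert mu dmu e).
Proof.
apply: (cont_on_ext T (fun t => M t + e * D t)) => [t t_in|]; first by rewrite pert_clamp.
apply: cont_on_continuity => x.
by apply: continuity_pt_plus => //; apply: continuity_pt_mult => //; apply: continuity_pt_const.
Qed.

Lemma Ifun_pert e : Ifun T (pert mu dmu e) = Ifun T mu + e * Defs.Int dmu 0 T.
Proof.
have Mi := ex_RInt_continuity M 0 T M_cont; have Di := ex_RInt_continuity D 0 T D_cont.
rewrite /Ifun (Int_eq_RInt T mu M) ?(Int_eq_RInt T dmu D) -?RInt_affine //; try lra.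
- apply: Int_eq_RInt; [lra | | exact: pert_clamp].
  by move=> x; apply: continuity_pt_plus => //; apply: continuity_pt_mult => //; apply: continuity_pt_const.
- by move=> t t_in; rewrite /D clamp_id.
- by move=> t t_in; rewrite /M clamp_id.
Qed.

Lemma derivable_pt_lim_Ifun_pert :
  derivable_pt_lim (fun e => Ifun T (pert mu dmu e)) 0 (Defs.Int dmu 0 T).
Proof.
apply: (derivable_pt_lim_ext (fun e => Ifun T mu + e * Defs.Int dmu 0 T)).
  by move=> e; rewrite Ifun_pert.
exact: derivable_pt_lim_affine.
Qed.

Lemma derivable_Gfun_pert g : C1_real g ->
  exists l, derivable_pt_lim (fun e => Gfun g T (pert mu dmu e)) 0 l.
Proof.
move=> gC1; have [l gl] := derivable_RInt_param_affine g M D T gC1 M_cont D_cont.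
exists l; apply: (derivable_pt_lim_ext _ _ _ _ _ gl) => e.
have gc : forall x, continuity_pt g x.
  by case: gC1 => g' [g'_deriv _] x; apply: derivable_continuous_pt; exists (g' x); apply: g'_deriv.
rewrite /Gfun (Int_eq_RInt T _ (fun t => g (M t + e * D t))) //; first lra; last first.
  by move=> t t_in; rewrite pert_clamp.
move=> x; apply: continuity_pt_comp; last exact: gc.
by apply: continuity_pt_plus => //; apply: continuity_pt_mult => //; apply: continuity_pt_const.
Qed.

End FirstVariation.

Lemma derivable_pt_lim_terminal_cost {n s} (h : vec n -> vec s -> vec n) p z0 zh
    (Phi : vec n -> R) (DPhi : vec n -> vec n) (Z : (R -> R) -> R -> vec n) T mu dmu :
  0 < T -> C1_vector (fun x => h x p) -> auto_sol h p z0 zh ->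
  (forall x, frechet_grad Phi x (DPhi x)) ->
  (forall m, cont_on 0 T m -> is_sol h p z0 T m (Z m)) ->
  cont_on 0 T mu -> cont_on 0 T dmu ->
  derivable_pt_lim (fun e => Phi (Z (pert mu dmu e) T)) 0
    (Phi_h DPhi h p (Z mu T) * Defs.Int dmu 0 T).
Proof.
move=> T0 hC1 zh_sol PhiF ZS muc dmuc.
have ZT m : cont_on 0 T m -> Z m T = zh (Ifun T m).
  by move=> mc; apply: (solution_terminal_state h p z0) => //; apply: ZS.
set I := Ifun T mu; set J := Defs.Int dmu 0 T.
apply: (derivable_pt_lim_ext (fun e => Phi (zh (I + e * J)))).
  by move=> e; rewrite ZT ?Ifun_pert //; apply: cont_on_pert.
rewrite ZT //; apply: (derivable_pt_lim_comp (fun e => I + e * J) (fun u => Phi (zh u))).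
  exact: derivable_pt_lim_affine.
rewrite Rmult_0_l Rplus_0_r; apply: derivable_pt_lim_frechet_comp => [i|].
  exact: (proj2 zh_sol).
exact: PhiF.
Qed.

Lemma derivable_pt_lim_eq0 f x l : derivable_pt_lim f x l -> derivable_pt_lim f x 0 <-> l = 0.
Proof. by move=> fl; split=> [/(uniqueness_limite _ _ _ _ fl) | <-]. Qed.

Lemma stationary_multiplier_rescale A B G a l P lam : P <> 0 ->
  derivable_pt_lim A 0 (P * a) -> derivable_pt_lim B 0 a -> derivable_pt_lim G 0 l ->
  derivable_pt_lim (fun e => A e + lam * G e) 0 0 <->
  derivable_pt_lim (fun e => B e + lam / P * G e) 0 0.
Proof.
move=> P0 Aa Ba Gl.
have AG : derivable_pt_lim (fun e => A e + lam * G e) 0 (P * a + lam * l).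
  exact: derivable_pt_lim_plus _ _ _ _ _ Aa (derivable_pt_lim_scal _ lam _ _ Gl).
have BG : derivable_pt_lim (fun e => B e + lam / P * G e) 0 (a + lam / P * l).
  exact: derivable_pt_lim_plus _ _ _ _ _ Ba (derivable_pt_lim_scal _ (lam / P) _ _ Gl).
rewrite (derivable_pt_lim_eq0 _ _ _ AG) (derivable_pt_lim_eq0 _ _ _ BG).
have -> : a + lam / P * l = (P * a + lam * l) / P by field.
split=> [-> | E]; first by rewrite /Rdiv Rmult_0_l.
by have := Rmult_eq_compat_r P _ _ E; rewrite Rmult_0_l /Rdiv Rmult_assoc Rinv_l // Rmult_1_r.
Qed.

Theorem theorem1 (n s : nat) (h : vec n -> vec s -> vec n) (p : vec s) (z0 : vec n)
    (Phi : vec n -> R) (DPhi : vec n -> vec n) (g : R -> R)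
    (Z : (R -> R) -> R -> vec n) (T C1 : R) (mu : R -> R) :
  (1 <= n)%nat -> (1 <= s)%nat ->
  (forall q : vec s, C1_vector (fun x => h x q)) ->
  (exists zh : R -> vec n,
      auto_sol h p z0 zh /\ forall w : R -> vec n, auto_sol h p z0 w -> w = zh) ->
  C1_scalar Phi DPhi ->
  C1_real g -> (forall x, 0 < g x) ->
  0 < T -> 0 < C1 ->
  (forall m : R -> R, cont_on 0 T m -> is_sol h p z0 T m (Z m)) ->
  cont_on 0 T mu -> (forall t, 0 <= t <= T -> 0 < mu t) ->
  Phi_h DPhi h p (Z mu T) <> 0 ->
  (* the Gateaux derivatives exist *)
  (forall dmu : R -> R, cont_on 0 T dmu ->
     (exists l, derivable_pt_lim (fun e => Phi (Z (pert mu dmu e) T)) 0 l) /\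
     (exists l, derivable_pt_lim (fun e => Gfun g T (pert mu dmu e)) 0 l) /\
     (exists l, derivable_pt_lim (fun e => Ifun T (pert mu dmu e)) 0 l)) /\
  (* (a) <-> (b) *)
  ((Gfun g T mu = C1 /\
     exists lam : R, forall dmu : R -> R, cont_on 0 T dmu ->
       derivable_pt_lim
         (fun e => Phi (Z (pert mu dmu e) T) + lam * Gfun g T (pert mu dmu e)) 0 0)
   <->
   (Gfun g T mu = C1 /\
     exists lamr : R, forall dmu : R -> R, cont_on 0 T dmu ->
       derivable_pt_lim
         (fun e => Ifun T (pert mu dmu e) + lamr * Gfun g T (pert mu dmu e)) 0 0)) /\
  (* multipliers correspond via lam_ref = lam / Phi_h(mu) *)
  (forall lam : R,
     (forall dmu : R -> R, cont_on 0 T dmu ->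
       derivable_pt_lim
         (fun e => Phi (Z (pert mu dmu e) T) + lam * Gfun g T (pert mu dmu e)) 0 0)
     <->
     (forall dmu : R -> R, cont_on 0 T dmu ->
       derivable_pt_lim
         (fun e => Ifun T (pert mu dmu e)
                   + (lam / Phi_h DPhi h p (Z mu T)) * Gfun g T (pert mu dmu e)) 0 0)).
Proof.
move=> _ _ hC1 [zh [zh_sol _]] [PhiF _] gC1 _ T0 _ ZS muc _ P0.
set P := Phi_h DPhi h p (Z mu T).
have Phi_deriv dmu : cont_on 0 T dmu ->
    derivable_pt_lim (fun e => Phi (Z (pert mu dmu e) T)) 0 (P * Defs.Int dmu 0 T).
  by move=> dmuc; apply: (derivable_pt_lim_terminal_cost h p z0 zh) => //; apply: hC1.
have rescale lam :
    (forall dmu, cont_on 0 T dmu -> derivable_pt_lim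
       (fun e => Phi (Z (pert mu dmu e) T) + lam * Gfun g T (pert mu dmu e)) 0 0) <->
    (forall dmu, cont_on 0 T dmu -> derivable_pt_lim
       (fun e => Ifun T (pert mu dmu e) + lam / P * Gfun g T (pert mu dmu e)) 0 0).
  split=> stat dmu dmuc; have [l Gl] := derivable_Gfun_pert T mu dmu T0 muc dmuc g gC1;
    have eqv := stationary_multiplier_rescale _ _ _ _ _ P lam P0 (Phi_deriv dmu dmuc)
      (derivable_pt_lim_Ifun_pert T mu dmu T0 muc dmuc) Gl;
    by apply/eqv; apply: stat.
split; [|split; [|exact: rescale]].
- move=> dmu dmuc; split; first by eexists; apply: Phi_deriv.
  split; first exact: derivable_Gfun_pert.
  by eexists; apply: derivable_pt_lim_Ifun_pert.
- split=> [[G_C1 [lam stat]] | [G_C1 [lamr stat]]]; split=> //.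
  + by exists (lam / P); apply/rescale.
  + exists (lamr * P); apply/rescale.
    by have -> : lamr * P / P = lamr by field.
Qed.
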